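(* Let $L\ge2$ and $q\in[1,2]$. Under balance $\lambda=0$, the weight decay $\frac12\sum_{i=1}^L\|w_i\|_{L_2}^2$ expressed in $x=\prod_iw_i$ equals $\frac L2\sum_{j\in[n]}|x_j|^{2/L}$. This function coincides with the on-manifold regularizer $M_{\mathrm{reg}}(x)=\frac{L}{L(2-q)+q}\sum_{j\in[n]}|x_j|^{2-q\frac{L-1}{L}}$ (for all $x\in\mathbb{R}^n$) if and only if $q=2$.
   Context: Setting: $w_1,\dots,w_L\in\mathbb{R}^n$, $x=\prod_iw_i$ entrywise; balance $\lambda=0$ means $|w_i|^q=|w_j|^q$ entrywise for all $i,j$, so $|w_i|=|x|^{1/L}$. $M_{\mathrm{reg}}$ is the regularizer induced on $x$ by decoupled weight decay under $L_p$ steepest descent ($1/p+1/q=1$) with mirror map $\nabla^2R(x)=\operatorname{diag}(1/(L|x_j|^{q(L-1)/L}))$, defined as $\sum_j\int^{x_j}\partial_j^2R(s)\,Ls\,ds$. *)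

From mathcomp Require Import all_boot all_order all_algebra.
From mathcomp Require Import all_classical all_reals all_analysis.
Set Implicit Arguments. Unset Strict Implicit. Unset Printing Implicit Defensive.
Import Order.TTheory GRing.Theory Num.Theory.
Local Open Scope ring_scope.

Definition prod_layers (R : realType) (L n : nat) (w : 'I_L -> 'I_n -> R)
  : 'I_n -> R := fun j => \prod_(i < L) w i j.

Definition balanced (R : realType) (L n : nat) (q : R) (w : 'I_L -> 'I_n -> R)
  : Prop := forall (i i' : 'I_L) (j : 'I_n), `|w i j| `^ q = `|w i' j| `^ q.

Definition weight_decay (R : realType) (L n : nat) (w : 'I_L -> 'I_n -> R) : R :=
  2^-1 * \sum_(i < L) \sum_(j < n) (w i j) ^+ 2.

Definition wd_in_x (R : realType) (L n : nat) (x : 'I_n -> R) : R :=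
  (L%:R / 2) * \sum_(j < n) `|x j| `^ (2 / L%:R).

Definition Mreg (R : realType) (L n : nat) (q : R) (x : 'I_n -> R) : R :=
  (L%:R / (L%:R * (2 - q) + q)) *
  \sum_(j < n) `|x j| `^ (2 - q * ((L%:R - 1) / L%:R)).

(* Balance with q > 0 forces |w_i j| to be the same number a_j for every layer i, so the weight
   decay is (L/2) sum_j a_j^2 while |x_j|^(2/L) = (a_j^L)^(2/L) = a_j^2.  At q = 2 the exponent
   of M_reg is 2 - 2(L-1)/L = 2/L and its coefficient is L/2, so the two functions agree.
   Conversely, evaluating both at the all-ones vector gives L/(L(2-q)+q) = L/2, i.e.
   (L-1)(2-q) = 0, hence q = 2 since L >= 2. *)
From mathcomp Require Import all_boot all_order all_algebra.
From mathcomp Require Import all_classical all_reals all_analysis.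
From mathcomp Require Import ring.
Import Order.TTheory GRing.Theory Num.Theory.
Local Open Scope ring_scope.

Section Regularizers.
Variable R : realType.

Lemma powR_exprn_div (a r : R) (L : nat) :
  0 <= a -> (0 < L)%N -> (a ^+ L) `^ (r / L%:R) = a `^ r.
Proof.
move=> a0 L0; have LR0 : (L%:R : R) != 0 by rewrite pnatr_eq0 -lt0n.
by rewrite -powR_mulrn // -powRrM mulrCA divff // mulr1.
Qed.

Lemma balanced_norm_eq (L n : nat) (q : R) (w : 'I_L -> 'I_n -> R) :
  0 < q -> balanced q w -> forall i i' j, `|w i j| = `|w i' j|.
Proof.
move=> q0 hb i i' j.
by apply: (powR_injective q0); rewrite ?inE ?nnegrE ?normr_ge0 //=; apply: hb.
Qed.

Lemma weight_decay_balanced (L n : nat) (q : R) (w : 'I_L -> 'I_n -> R) :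
  (0 < L)%N -> 0 < q -> balanced q w ->
  weight_decay w = wd_in_x L (prod_layers w).
Proof.
move=> L0 q0 hb; pose a j := `|w (Ordinal L0) j|.
have a0 j : 0 <= a j := normr_ge0 _.
have ha i j : `|w i j| = a j by apply: balanced_norm_eq q0 hb _ _ _.
have sq_layers j : \sum_(i < L) w i j ^+ 2 = L%:R * a j ^+ 2.
  under eq_bigr => i _ do rewrite -real_normK ?num_real // ha.
  by rewrite sumr_const card_ord mulr_natl.
have sq_prod j : `|prod_layers w j| `^ (2 / L%:R) = a j ^+ 2.
  rewrite /prod_layers /= normr_prod (eq_bigr (fun _ => a j)) => [|i _]; last exact: ha.
  by rewrite prodr_const card_ord powR_exprn_div // -[2]/(2%:R) powR_mulrn.
rewrite /weight_decay /wd_in_x exchange_big /=.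
rewrite (eq_bigr _ (fun j _ => sq_layers j)) (eq_bigr _ (fun j _ => sq_prod j)).
by rewrite -mulr_sumr mulrA [2^-1 * _]mulrC.
Qed.

Lemma Mreg2 (L n : nat) (x : 'I_n -> R) :
  (0 < L)%N -> Mreg L 2 x = wd_in_x L x.
Proof.
move=> L0; have LR0 : (L%:R : R) != 0 by rewrite pnatr_eq0 -lt0n.
rewrite /Mreg; have -> : 2 - 2 * ((L%:R - 1) / L%:R) = 2 / L%:R :> R.
  by rewrite mulrBl divff // mul1r mulrBr mulr1 opprB addrC subrK.
by rewrite subrr mulr0 add0r /wd_in_x.
Qed.

Lemma sum_powR_norm1 (n : nat) (e : R) : \sum_(j < n) `|1 : R| `^ e = n%:R.
Proof. by rewrite normr1 powR1 sumr_const card_ord. Qed.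

(* No bound on q is needed: if the denominator vanishes, the left side is the junk value 0. *)
Lemma Mreg_coef_eq_half (L : nat) (q : R) :
  (1 < L)%N -> L%:R / (L%:R * (2 - q) + q) = L%:R / 2 -> q = 2.
Proof.
move=> L1; have LR0 : (L%:R : R) != 0 by rewrite pnatr_eq0 -lt0n ltnW.
move=> /(mulfI LR0) /invr_inj denom2.
have : (L%:R - 1) * (2 - q) = 0.
  by transitivity (L%:R * (2 - q) + q - 2); [ring | rewrite denom2 subrr].
move/eqP; rewrite mulf_eq0 !subr_eq0 => /orP[/eqP L_eq1 | /eqP //].
by move: L1; rewrite -(ltr_nat R) L_eq1 ltxx.
Qed.

End Regularizers.

Theorem corollary4 (R : realType) (L n : nat) (q : R)
  (hL : (2 <= L)%N) (hn : (0 < n)%N) (hq1 : 1 <= q) (hq2 : q <= 2) :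
  (forall w : 'I_L -> 'I_n -> R, balanced q w ->
     weight_decay w = wd_in_x L (prod_layers w)) /\
  ((forall x : 'I_n -> R, wd_in_x L x = Mreg L q x) <-> q = 2).
Proof.
have L0 : (0 < L)%N by apply: leq_trans hL.
split=> [w|]; first by apply: weight_decay_balanced => //; apply: lt_le_trans hq1.
split=> [/(_ (fun _ => 1)) | -> x]; last by rewrite Mreg2.
have nR0 : (n%:R : R) != 0 by rewrite pnatr_eq0 -lt0n.
rewrite /wd_in_x /Mreg !sum_powR_norm1 => /(mulIf nR0) /esym.
exact: Mreg_coef_eq_half.
Qed.
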